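(* In the lookdown representation, for each $n$, the map $i\mapsto\tau((n,i))$ is non-increasing on $\{1,\dots,X_n\}$, where $\tau(v)=\inf\{m:D_m(v)=\emptyset\}$.
   Context: Data: $\tau\in\mathbb{N}\cup\{\infty\}$, positive integers $(X_n)_{n<\tau}$, vectors $k_n=(k_n(i))_{i=1}^{X_n}$ of nonnegative integers with $\sum_ik_n(i)=X_{n+1}$. $V_n=\{(n,i):1\le i\le X_n\}$. Lookdown representation: for each $n$ fix a partition $\xi_n$ of $\{1,\dots,X_{n+1}\}$ whose block sizes are the nonzero entries of $k_n$; let $(\sigma_n)$ be independent uniform random permutations of $\{1,\dots,X_{n+1}\}$; list the blocks of $\{\sigma_n(A):A\in\xi_n\}$ in increasing order of least element as $B_1,\dots,B_{\ell_n}$; edges are $((n,i),(n+1,j))$, $j\in B_i$. For $v\in V_n$, $m\ge n$, $D_m(v)$ denotes the descendants of $v$ in generation $m$ (empty if $m\ge\tau$); $\inf\emptyset=\infty$. *)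

From mathcomp Require Import all_boot all_fingroup.
Set Implicit Arguments. Unset Strict Implicit. Unset Printing Implicit Defensive.

(* tau : option nat, None = infinity; generation n exists iff alive tau n. *)
Definition alive (tau : option nat) (n : nat) : bool :=
  if tau is Some t then n < t else true.

Definition minlab N (A : {set 'I_N}) : nat := \big[minn/N]_(j in A) (val j).

Definition ld_blocks N (xi : {set {set 'I_N}}) (s : {perm 'I_N}) : seq {set 'I_N} :=
  sort (fun A B => minlab A <= minlab B) [seq [set s x | x in A] | A : {set 'I_N} <- enum xi].

(* Labels are 1-indexed natural numbers as in the paper: vertex (n,i), 1 <= i <= X n.
   Label j of generation n+1 corresponds to the ordinal j-1 of 'I_(X n.+1).
   Edge ((n,i),(n+1,j)) iff j in B_i (the i-th block, 1-indexed). *)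
Definition ld_edge (X : nat -> nat) (xi : forall n, {set {set 'I_(X n.+1)}})
  (sigma : forall n, {perm 'I_(X n.+1)}) (n i j : nat) : bool :=
  (0 < i <= X n) && (0 < j) &&
  [exists j' : 'I_(X n.+1),
     (val j' == j.-1) && (j' \in nth set0 (ld_blocks (xi n) (sigma n)) i.-1)].

(* ld_desc n i d j : (n+d, j) is a descendant of (n, i) *)
Fixpoint ld_desc (X : nat -> nat) (xi : forall n, {set {set 'I_(X n.+1)}})
  (sigma : forall n, {perm 'I_(X n.+1)}) (n i d j : nat) : bool :=
  match d with
  | 0 => (0 < i <= X n) && (j == i)
  | d'.+1 => has (fun l => @ld_desc X xi sigma n i d' l && @ld_edge X xi sigma (n + d') l j)
                 (iota 1 (X (n + d')))
  end.

Definition ld_D X xi sigma (n i m : nat) : seq nat :=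
  [seq j <- iota 1 (X m) | @ld_desc X xi sigma n i (m - n) j].

(* extended naturals N u {oo}: None = oo *)
Definition le_ext (a b : option nat) : Prop :=
  match a, b with
  | _, None => True
  | None, Some _ => False
  | Some x, Some y => x <= y
  end.

(* t = inf { m >= n : D_m((n,i)) = empty }, with inf of the empty set = oo *)
Definition vtau X xi sigma (n i : nat) (t : option nat) : Prop :=
  match t with
  | Some m => n <= m /\ @ld_D X xi sigma n i m = [::] /\
              (forall m', n <= m' -> @ld_D X xi sigma n i m' = [::] -> m <= m')
  | None => forall m, n <= m -> @ld_D X xi sigma n i m <> [::]
  end.

From mathcomp Require Import all_boot all_order all_fingroup.
Set Implicit Arguments. Unset Strict Implicit. Unset Printing Implicit Defensive.
Import Order.TTheory.

(* The blocks B_1, B_2, ... of generation n+1 are listed in increasing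
   order of their least elements, so whenever (n,l') has a child j', every
   lower label l <= l' has a child j <= j', namely the least element of B_l
   (which is at most the least element of B_l', itself at most j').
   Iterating this one-generation comparison, any descendant of (n,i') in
   generation m is dominated by a descendant of (n,i) whenever i <= i'; so
   D_m((n,i)) is non-empty whenever D_m((n,i')) is, and therefore
   tau((n,i')) <= tau((n,i)). *)

Lemma minlab_le N (A : {set 'I_N}) x : x \in A -> minlab A <= val x.
Proof. by move=> xA; rewrite /minlab -minEnat; exact: (bigmin_le_cond N _ xA). Qed.

Lemma minlab_attained N (A : {set 'I_N}) x :
  x \in A -> exists2 y, y \in A & minlab A = val y.
Proof.
move=> xA; rewrite /minlab -minEnat.
have [y yA ->] := eq_bigmin (x := N) x _ (fun i : 'I_N => val i) xA
                    (fun i _ => ltnW (ltn_ord i)).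
by exists y.
Qed.

Section Blocks.
Variables (N : nat) (xi : {set {set 'I_N}}) (s : {perm 'I_N}).
Local Notation bs := (ld_blocks xi s).

Lemma minlab_blocks_mono l l' :
  l <= l' -> l' < size bs -> minlab (nth set0 bs l) <= minlab (nth set0 bs l').
Proof.
move=> ll' l'bs.
pose le_min := fun A B : {set 'I_N} => minlab A <= minlab B.
have bs_sorted : sorted le_min bs by apply: sort_sorted => A B; exact: leq_total.
have le_min_trans : transitive le_min.
  by move=> B A C; exact: (@leq_trans (minlab B)).
apply: (sorted_leq_nth le_min_trans (fun A => leqnn (minlab A)) set0 bs_sorted) => //.
by rewrite inE (leq_ltn_trans ll' l'bs).
Qed.

Lemma ld_blocks_nonempty B : set0 \notin xi -> B \in bs -> exists x, x \in B.
Proof.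
move=> xi_ne; rewrite mem_sort => /mapP[A]; rewrite mem_enum => Axi ->.
have /set0Pn[x xA] : A != set0 by apply: contraNneq xi_ne => <-.
by exists (s x); exact: imset_f.
Qed.

End Blocks.

Section Descendants.
Variables (X : nat -> nat) (xi : forall n, {set {set 'I_(X n.+1)}})
  (sigma : forall n, {perm 'I_(X n.+1)}).
Hypothesis xi_nonempty : forall n, 0 < X n -> set0 \notin xi n.

Local Notation edge := (@ld_edge X xi sigma).
Local Notation desc := (@ld_desc X xi sigma).
Local Notation bs n := (ld_blocks (xi n) (sigma n)).

Lemma ld_edge_of_block n l (y : 'I_(X n.+1)) :
  0 < l <= X n -> y \in nth set0 (bs n) l.-1 -> edge n l (val y).+1.
Proof. by move=> lX yB; rewrite /ld_edge lX /=; apply/existsP; exists y; rewrite eqxx. Qed.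

Lemma ld_edge_lower n l l' j' :
  0 < l <= l' -> edge n l' j' -> exists2 j, j <= j' & edge n l j.
Proof.
move=> /andP[l_gt0 ll'] /andP[/andP[/andP[l'_gt0 l'X] j'_gt0]].
case/existsP=> y' /andP[/eqP y'E y'B].
have lpred : l.-1 <= l'.-1 by rewrite -!subn1 leq_sub2r.
have l'bs : l'.-1 < size (bs n).
  by rewrite ltnNge; apply: contraL y'B => /(nth_default set0) ->; rewrite inE.
have [x xB] := ld_blocks_nonempty (xi_nonempty (leq_trans l'_gt0 l'X))
                 (mem_nth set0 (leq_ltn_trans lpred l'bs)).
have [y yB yE] := minlab_attained xB.
exists (val y).+1; last by apply: ld_edge_of_block yB; rewrite l_gt0 (leq_trans ll' l'X).
rewrite -(prednK j'_gt0) ltnS -y'E -yE.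
exact: leq_trans (minlab_blocks_mono lpred l'bs) (minlab_le y'B).
Qed.

Lemma ld_desc_label n i d j : desc n i d j -> 0 < j <= X (n + d).
Proof.
case: d => [|d] /=; first by rewrite addn0 => /andP[iX /eqP->].
case/hasP=> l _ /andP[_ /andP[/andP[_ j_gt0]]] /existsP[y /andP[/eqP yE _]].
by rewrite j_gt0 addnS -(prednK j_gt0) -yE ltn_ord.
Qed.

Lemma ld_desc_lower n i i' :
  0 < i <= i' -> i' <= X n ->
  forall d j', desc n i' d j' -> exists2 j, j <= j' & desc n i d j.
Proof.
move=> /andP[i_gt0 ii'] i'X; elim=> [|d IH] j' /=.
  by case/andP=> _ /eqP->; exists i; rewrite ?i_gt0 ?(leq_trans ii' i'X) ?eqxx.
case/hasP=> l _ /andP[desc_l edge_l].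
have [l0 l0l desc_l0] := IH l desc_l.
have /andP[l0_gt0 l0X] := ld_desc_label desc_l0.
have [j jj' edge_j] := ld_edge_lower (introT andP (conj l0_gt0 l0l)) edge_l.
exists j => //; apply/hasP; exists l0; last by rewrite desc_l0 edge_j.
by rewrite mem_iota add1n ltnS l0_gt0.
Qed.

Lemma ld_D_lower n i i' m j' :
  0 < i <= i' -> i' <= X n -> n <= m ->
  j' \in @ld_D X xi sigma n i' m -> exists2 j, j <= j' & j \in @ld_D X xi sigma n i m.
Proof.
move=> ii' i'X nm; rewrite mem_filter => /andP[desc_j' _].
have [j jj' desc_j] := ld_desc_lower ii' i'X desc_j'.
have := ld_desc_label desc_j; rewrite subnKC // => /andP[j_gt0 jX].
by exists j; rewrite // mem_filter desc_j mem_iota add1n ltnS j_gt0.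
Qed.

Lemma ld_vtau_mono n i i' t t' :
  0 < i <= i' -> i' <= X n ->
  @vtau X xi sigma n i t -> @vtau X xi sigma n i' t' -> le_ext t' t.
Proof.
move=> ii' i'X; case: t => [m [nm [Dm _]]|] vtau_i'; last by case: t'.
have Dm' : @ld_D X xi sigma n i' m = [::].
  case E: (ld_D _ _ _ _ _) => [|j' r] //.
  have /(ld_D_lower ii' i'X nm)[j _] : j' \in @ld_D X xi sigma n i' m.
    by rewrite E mem_head.
  by rewrite Dm.
by case: t' vtau_i' => [m' [_ [_ minimal']]|alive'];
  [exact: minimal' nm Dm' | exact: alive' m nm Dm'].
Qed.

End Descendants.

Theorem corollary4p2 (tau : option nat) (X : nat -> nat) (k : nat -> nat -> nat)
  (xi : forall n, {set {set 'I_(X n.+1)}}) (sigma : forall n, {perm 'I_(X n.+1)}) :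
  (forall n, alive tau n -> 0 < X n) ->
  (forall n, ~~ alive tau n -> X n = 0) ->
  (forall n, alive tau n -> \sum_(1 <= i < (X n).+1) k n i = X n.+1) ->
  (forall n, alive tau n ->
     partition (xi n) [set: 'I_(X n.+1)] /\
     perm_eq [seq #|A| | A : {set 'I_(X n.+1)} <- enum (xi n)] [seq k n i | i <- iota 1 (X n) & 0 < k n i]) ->
  forall n, alive tau n ->
  forall i i', 1 <= i <= i' -> i' <= X n ->
  forall t t', @vtau X xi sigma n i t -> @vtau X xi sigma n i' t' -> le_ext t' t.
Proof.
move=> _ dead_empty _ xi_partition n _ i i' ii' i'X t t'.
(* Each xi n with X n > 0 comes from a living generation, so it is a partition
   and has no empty block. *)
have xi_nonempty m : 0 < X m -> set0 \notin xi m.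
  case: (boolP (alive tau m)) => [alive_m _ | dead_m]; last by rewrite dead_empty.
  by have [/and3P[_ _ ->] _] := xi_partition m alive_m.
exact: (ld_vtau_mono xi_nonempty ii' i'X).
Qed.
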